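(* Let $E$ be a regular biordered set satisfying: (E1) there exists $0\in E$ with $0\,\omega\,e$ for every $e\in E$; (E2) there is a map $e\mapsto e'$ on $E$ such that for all $e,f\in E$: (i) $(e')'=e$; (ii) $f\,\omega^l\,e$ iff $e'\,\omega^r\,f'$; (iii) $f\,\omega^l\,e'$ iff $M(f,e)=\{0\}$. Then for each $e\in E$, the elements $\mathcal L(e)$ and $\mathcal L(e')$ are complements of each other in the lattice $L(E)=E/\mathcal L$.
   Context: A regular biordered set is a partial algebra isomorphic to the set of idempotents $E(S)$ of a regular semigroup $S$ (regular: every $x$ has $y$ with $xyx=x$), where $ef$ (computed in $S$) is defined when $\{ef,fe\}\cap\{e,f\}\ne\emptyset$. In $E$: $\omega^l=\{(e,f): ef=e\}$, $\omega^r=\{(e,f): fe=e\}$, $\omega=\omega^l\cap\omega^r$, $M(e,f)=\{g\in E: g\,\omega^l\,e,\ g\,\omega^r\,f\}$. $\mathcal L=\omega^l\cap(\omega^l)^{-1}$ with classes $\mathcal L(e)$; $E/\mathcal L$ is ordered by $\mathcal L(e)\le\mathcal L(f)$ iff $e\,\omega^l\,f$, and under (E1),(E2) it is a lattice with least element $\mathcal L(0)$ and greatest element $\mathcal L(1)$, where $1=0'$. Two elements $a,b$ are complements if $a\wedge b$ is the least element and $a\vee b$ the greatest element. *)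

(* A regular biordered set is (up to isomorphism) the set E(S) of idempotents
   of a regular semigroup S, with the partial product inherited from S. *)

Definition associative_op {S : Type} (mul : S -> S -> S) : Prop :=
  forall x y z, mul x (mul y z) = mul (mul x y) z.

Definition regular_semigroup {S : Type} (mul : S -> S -> S) : Prop :=
  associative_op mul /\ forall x, exists y, mul (mul x y) x = x.

Definition idem {S : Type} (mul : S -> S -> S) (e : S) : Prop := mul e e = e.

Definition omega_l {S : Type} (mul : S -> S -> S) (e f : S) : Prop := mul e f = e.
Definition omega_r {S : Type} (mul : S -> S -> S) (e f : S) : Prop := mul f e = e.
Definition omega {S : Type} (mul : S -> S -> S) (e f : S) : Prop :=
  omega_l mul e f /\ omega_r mul e f.

Definition Mset {S : Type} (mul : S -> S -> S) (e f : S) (g : S) : Prop :=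
  idem mul g /\ omega_l mul g e /\ omega_r mul g f.

(* The lattice E/L is the quotient of the preorder omega^l on E; we describe
   its order-theoretic notions on representatives (L-classes of idempotents). *)
Definition is_meet {S : Type} (mul : S -> S -> S) (a b m : S) : Prop :=
  idem mul m /\ omega_l mul m a /\ omega_l mul m b /\
  forall g, idem mul g -> omega_l mul g a -> omega_l mul g b -> omega_l mul g m.

Definition is_join {S : Type} (mul : S -> S -> S) (a b j : S) : Prop :=
  idem mul j /\ omega_l mul a j /\ omega_l mul b j /\
  forall g, idem mul g -> omega_l mul a g -> omega_l mul b g -> omega_l mul j g.

Definition is_least {S : Type} (mul : S -> S -> S) (m : S) : Prop :=
  forall g, idem mul g -> omega_l mul m g.

Definition is_greatest {S : Type} (mul : S -> S -> S) (j : S) : Prop :=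
  forall g, idem mul g -> omega_l mul g j.

Definition L_complements {S : Type} (mul : S -> S -> S) (a b : S) : Prop :=
  (exists m, is_meet mul a b m /\ is_least mul m) /\
  (exists j, is_join mul a b j /\ is_greatest mul j).


(* Meet: a common lower bound g of e and e' makes eg a member of
   M(g, e) = {0}, so g = geg = g0 lies below 0.  Join: by (ii) the map '
   turns the L-order into the reversed R-order, so 0' is the greatest
   element; for an upper bound g of e and e', h = g' satisfies eh = h = e'h,
   so he lies in M(he, e') = {0} and h = heh = 0, i.e. g = 0'. *)

Section Semigroup.

Variables (S : Type) (mul : S -> S -> S).
Hypothesis assoc : associative_op mul.

Lemma Mset_mul_l (e g : S) :
  idem mul e -> idem mul g -> omega_l mul g e -> Mset mul g e (mul e g).
Proof.
  unfold Mset, idem, omega_l, omega_r. intros He Hg Hge. repeat split.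
  - rewrite <- assoc, (assoc g e g), Hge, Hg. reflexivity.
  - rewrite <- assoc, Hg. reflexivity.
  - rewrite assoc, He. reflexivity.
Qed.

Lemma Mset_mul_r (e f h : S) :
  idem mul h -> omega_r mul h e -> omega_r mul h f ->
  Mset mul (mul h e) f (mul h e).
Proof.
  unfold Mset, idem, omega_l, omega_r. intros Hh Heh Hfh.
  assert (Hidem : mul (mul h e) (mul h e) = mul h e).
  { rewrite <- assoc, (assoc e h e), Heh, assoc, Hh. reflexivity. }
  repeat split; try exact Hidem.
  rewrite assoc, Hfh. reflexivity.
Qed.

End Semigroup.

Section ComplementedBiorder.

Variables (S : Type) (mul : S -> S -> S) (zero : S) (c : S -> S).
Hypothesis assoc : associative_op mul.
Hypothesis Hzero : idem mul zero.
Hypothesis E1 : forall e, idem mul e -> omega mul zero e.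
Hypothesis Hc : forall e, idem mul e -> idem mul (c e).
Hypothesis E2i : forall e, idem mul e -> c (c e) = e.
Hypothesis E2ii : forall e f, idem mul e -> idem mul f ->
  (omega_l mul f e <-> omega_r mul (c e) (c f)).
Hypothesis E2iii : forall e f, idem mul e -> idem mul f ->
  (omega_l mul f (c e) <-> (forall g, Mset mul f e g <-> g = zero)).

Lemma zero_least : is_least mul zero.
Proof. intros g Hg. apply (proj1 (E1 g Hg)). Qed.

Lemma compl_zero_greatest : is_greatest mul (c zero).
Proof.
  intros g Hg. apply (E2ii (c zero) g (Hc zero Hzero) Hg).
  rewrite E2i by exact Hzero. apply (proj2 (E1 (c g) (Hc g Hg))).
Qed.

Lemma Mset_eq_zero (e f g : S) : idem mul e -> idem mul f ->
  omega_l mul f (c e) -> Mset mul f e g -> g = zero.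
Proof. intros He Hf Hfc. apply (proj1 (E2iii e f He Hf) Hfc). Qed.

Lemma omega_l_compl_zero (e g : S) : idem mul e -> idem mul g ->
  omega_l mul g e -> omega_l mul g (c e) -> omega_l mul g zero.
Proof.
  intros He Hg Hge Hgc.
  assert (Heg : mul e g = zero).
  { apply (Mset_eq_zero e g); try assumption. apply Mset_mul_l; assumption. }
  unfold omega_l, idem in *.
  rewrite <- Heg, assoc, Hge. exact Hg.
Qed.

Lemma omega_r_compl_zero (e h : S) : idem mul e -> idem mul h ->
  omega_r mul h e -> omega_r mul h (c e) -> h = zero.
Proof.
  intros He Hh Heh Hch.
  assert (Hhe : mul h e = zero).
  { assert (HM : Mset mul (mul h e) (c e) (mul h e)) by (apply Mset_mul_r; assumption).
    apply (Mset_eq_zero (c e) (mul h e)); try assumption.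
    - apply Hc, He.
    - apply HM.
    - rewrite E2i by exact He. unfold omega_l, idem in *.
      rewrite <- assoc, He. reflexivity. }
  unfold omega_r, idem in *.
  transitivity (mul (mul h e) h).
  - rewrite <- assoc, Heh. symmetry. exact Hh.
  - rewrite Hhe. apply (proj1 (E1 h Hh)).
Qed.

Lemma is_meet_compl (e : S) : idem mul e -> is_meet mul e (c e) zero.
Proof.
  intros He. repeat split.
  - exact Hzero.
  - apply (proj1 (E1 e He)).
  - apply (proj1 (E1 (c e) (Hc e He))).
  - intros g Hg. apply omega_l_compl_zero; assumption.
Qed.

Lemma is_join_compl (e : S) : idem mul e -> is_join mul e (c e) (c zero).
Proof.
  intros He. repeat split.
  - apply Hc, Hzero.
  - apply compl_zero_greatest, He.
  - apply compl_zero_greatest, Hc, He.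
  - intros g Hg Heg Hcg.
    apply (E2ii g (c zero) Hg (Hc zero Hzero)).
    assert (Hcg0 : c g = zero).
    { apply (omega_r_compl_zero e); [exact He | apply Hc, Hg | |].
      - pose proof (proj1 (E2ii g (c e) Hg (Hc e He)) Hcg) as Hr.
        rewrite E2i in Hr by exact He. exact Hr.
      - apply (E2ii g e Hg He), Heg. }
    unfold omega_r. rewrite E2i, Hcg0 by exact Hzero. exact Hzero.
Qed.

End ComplementedBiorder.

Theorem corollary3p5 (S : Type) (mul : S -> S -> S)
  (Hreg : regular_semigroup mul)
  (zero : S) (Hzero : idem mul zero)
  (E1 : forall e, idem mul e -> omega mul zero e)
  (c : S -> S) (Hc : forall e, idem mul e -> idem mul (c e))
  (E2i : forall e, idem mul e -> c (c e) = e)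
  (E2ii : forall e f, idem mul e -> idem mul f ->
            (omega_l mul f e <-> omega_r mul (c e) (c f)))
  (E2iii : forall e f, idem mul e -> idem mul f ->
            (omega_l mul f (c e) <-> (forall g, Mset mul f e g <-> g = zero)))
  (e : S) (He : idem mul e) :
  L_complements mul e (c e).
Proof.
  destruct Hreg as [assoc _].
  split.
  - exists zero. split.
    + exact (is_meet_compl S mul zero c assoc Hzero E1 Hc E2iii e He).
    + exact (zero_least S mul zero E1).
  - exists (c zero). split.
    + exact (is_join_compl S mul zero c assoc Hzero E1 Hc E2i E2ii E2iii e He).
    + exact (compl_zero_greatest S mul zero c Hzero E1 Hc E2i E2ii).
Qed.
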